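(* Let $\Omega^\delta$ be a hedgehog domain and, for a black square $u$ and a white square $v$ of $\Omega^\delta$ sharing a side, let $\mathbb{P}[u,v]$ be the probability that the domino $\{u,v\}$ belongs to a uniformly random domino tiling of $\Omega^\delta$. Then for every white square $a$ of $\Omega^\delta$ having no side on $\partial\Omega^\delta$, $$\mathbb{P}[a-\delta\lambda,a]+\mathbb{P}[a-\delta\bar\lambda,a]=\mathbb{P}[a+\delta\lambda,a]+\mathbb{P}[a+\delta\bar\lambda,a]=\tfrac12,$$ and for every black square $a$ of $\Omega^\delta$ having no side on $\partial\Omega^\delta$, $$\mathbb{P}[a,a+\delta\lambda]+\mathbb{P}[a,a-\delta\bar\lambda]=\mathbb{P}[a,a-\delta\lambda]+\mathbb{P}[a,a+\delta\bar\lambda]=\tfrac12 .$$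
   Context: Lattice: fix $\delta>0$, $\lambda=e^{i\pi/4}$, and write $[p,q]:=\delta p/\sqrt2+i\delta q/\sqrt2$ for integers $p,q$. The plane is tiled by closed squares of side $\delta$ centred at $[n,m]$ with $n+m$ even (sides parallel to $\lambda,\bar\lambda$); squares are identified with their centres, and the square $a$ shares a side exactly with the squares $a\pm\delta\lambda$, $a\pm\delta\bar\lambda$. The square $[n,m]$ is black if $n,m$ are even and white if they are odd. Vertices are the points $[p,q]$ with $p+q$ odd; $[p,q]$ is a $\circ$-vertex if $p$ is odd and $p+q\equiv 1\pmod 4$. Hedgehog domain: a $2\delta$-square is a closed square of side $2\delta$ whose four corners are $\circ$-vertices (a union of four tiling squares). A hedgehog domain $\Omega^\delta$ is the interior of a finite union of $2\delta$-squares, connected and simply connected, such that each of these $2\delta$-squares has either none of its sides, or exactly two sides sharing a common corner, contained in $\partial\Omega^\delta$; it is identified with the set of tiling squares it contains. A domino tiling is a partition of these squares into pairs of squares sharing a side. *)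

From HB Require Import structures.
From mathcomp Require Import all_boot all_order all_algebra.
From mathcomp Require Import finmap.
Set Implicit Arguments. Unset Strict Implicit. Unset Printing Implicit Defensive.
Import Order.TTheory GRing.Theory Num.Theory.
Local Open Scope fset_scope.
Local Open Scope ring_scope.

(* Coordinates: the point [p,q] = delta*p/sqrt2 + i*delta*q/sqrt2 is encoded
   by the pair (p,q) : int * int.  In these coordinates delta*lambda = [1,1]
   and delta*conj(lambda) = [1,-1]. *)
Definition pt := (int * int)%type.

Definition padd (x y : pt) : pt := ((fst x) + (fst y), (snd x) + (snd y)).
Definition popp (x : pt) : pt := (- (fst x), - (snd x)).
Definition psub (x y : pt) : pt := padd x (popp y).

Definition dlam : pt := (1, 1).
Definition dlamb : pt := (1, -1).

(* Tiling squares are identified with their centres [n,m], n+m even. *)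
Definition is_square (s : pt) : bool := (((fst s) + (snd s)) %% 2)%Z == 0.
Definition is_black (s : pt) : bool := (((fst s) %% 2)%Z == 0) && (((snd s) %% 2)%Z == 0).
Definition is_white (s : pt) : bool := (((fst s) %% 2)%Z == 1) && (((snd s) %% 2)%Z == 1).

Definition share_side (s t : pt) : bool :=
  psub t s \in [:: dlam; popp dlam; dlamb; popp dlamb].

(* Vertices [p,q], p+q odd; circ-vertices: p odd and p+q = 1 mod 4. *)
Definition is_circ_vertex (v : pt) : bool :=
  (((fst v) %% 2)%Z == 1) && ((((fst v) + (snd v)) %% 4)%Z == 1).

(* A 2delta-square is encoded by its centre w (a vertex of the tiling).
   Its corners are w +- (2,0), w +- (0,2); it is the union of the four
   tiling squares w +- (1,0), w +- (0,1). *)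
Definition big_corners (w : pt) : seq pt :=
  [:: padd w (2,0); psub w (2,0); padd w (0,2); psub w (0,2)].
Definition is_big (w : pt) : bool :=
  ((((fst w) + (snd w)) %% 2)%Z == 1) && all is_circ_vertex (big_corners w).
Definition big_cells (w : pt) : seq pt :=
  [:: padd w (1,0); psub w (1,0); padd w (0,1); psub w (0,1)].

(* The 2delta-squares sharing a side with w: w +- 2 delta lambda, w +- 2 delta conj(lambda). *)
Definition big_side_dirs : seq pt := [:: (2,2); (-2,-2); (2,-2); (-2,2)].
(* 2delta-squares sharing a side or a corner with w *)
Definition big_touch_dirs : seq pt := big_side_dirs ++ [:: (4,0); (-4,0); (0,4); (0,-4)].

Definition in_step (H : {fset pt}) (x y : pt) : bool :=
  (psub y x \in big_side_dirs) && (y \in H).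
Definition out_step (H : {fset pt}) (x y : pt) : bool :=
  (psub y x \in big_touch_dirs) && is_big y && (y \notin H).

(* Side d of the 2delta-square w lies on the boundary of the domain iff the
   2delta-square across that side is not in H. *)
Definition side_on_bdry (H : {fset pt}) (w d : pt) : bool := padd w d \notin H.

(* Boundary condition: none of the sides, or exactly two sides sharing a corner. *)
Definition hedgehog_local (H : {fset pt}) (w : pt) : bool :=
  let b := side_on_bdry H w in
  let L := (2,2) : pt in let Lb := (2,-2) : pt in
  [|| ~~ b L && ~~ b (popp L) && ~~ b Lb && ~~ b (popp Lb),
      b L && b Lb && ~~ b (popp L) && ~~ b (popp Lb),
      b Lb && b (popp L) && ~~ b L && ~~ b (popp Lb),
      b (popp L) && b (popp Lb) && ~~ b L && ~~ b Lb |
      b (popp Lb) && b L && ~~ b (popp L) && ~~ b Lb].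

(* H : finite set of 2delta-squares whose union has hedgehog interior. *)
Definition hedgehog (H : {fset pt}) : Prop :=
  [/\ (forall w, w \in H -> is_big w),
      (* interior connected: side-adjacency connectivity *)
      (forall w1 w2, w1 \in H -> w2 \in H ->
         exists s : seq pt, path (in_step H) w1 s && (last w1 s == w2)),
      (* interior simply connected: the complement (union of the closed
         2delta-squares not in H) has no bounded connected component *)
      (forall w, is_big w -> w \notin H -> forall N : nat,
         exists s : seq pt, path (out_step H) w s &&
                            ((N%:Z <= `|(last w s).1|) || (N%:Z <= `|(last w s).2|))) &
      (forall w, w \in H -> hedgehog_local H w)].

Definition dom_cells (H : {fset pt}) : {fset pt} :=
  \bigcup_(w <- H) [fset c | c in big_cells w].

Definition dominoes (H : {fset pt}) : {fset pt * pt} :=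
  [fset bw in dom_cells H `*` dom_cells H |
     is_black (fst bw) && is_white (snd bw) && share_side (fst bw) (snd bw)].

Definition is_tiling (H : {fset pt}) (T : {fset pt * pt}) : bool :=
  (T `<=` dominoes H) &&
  [forall c : dom_cells H,
     #|` [fset d in T | ((fst d) == val c) || ((snd d) == val c)]| == 1%N].

Definition tilings (H : {fset pt}) : {fset {fset pt * pt}} :=
  [fset T in fpowerset (dominoes H) | is_tiling H T].

Definition dprob (H : {fset pt}) (u v : pt) : rat :=
  (#|` [fset T in tilings H | (u, v) \in T]|)%:R / (#|` tilings H|)%:R.

Definition interior_square (H : {fset pt}) (a : pt) : bool :=
  (a \in dom_cells H) &&
  all (fun d => padd a d \in dom_cells H) [:: dlam; popp dlam; dlamb; popp dlamb].

(* Every domino (b, w) has, at one end of the common side of b and w, a point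
   v that is the midpoint of a side of the grid of 2delta-squares; the domino
   sits at v.  Each square has two such corners, and a tiling makes it pick the
   one at which its domino sits.  Two tilings with the same picking differ
   exactly by rotating the 2x2 blocks at their full vertices (where two dominoes
   sit), so a picking class has 2 ^ #full elements.  The complementary picking
   is realised by a tiling whose full vertices are the empty vertices (interior
   vertices at which no domino sits) of the first one.  In a hedgehog domain
   #full = #empty: summing a local identity over all vertices leaves only the
   boundary midpoints, and the hedgehog condition pairs these off through the
   corner squares of the 2delta-squares with two boundary sides.  Hence a tiling
   has as many tilings with the complementary picking as with its own, and
   double counting over such pairs shows that each square picks each of its
   corners in exactly half of the tilings.  The two dominoes of each equation
   of the statement are the two dominoes containing a that sit at one corner
   of a. *)

From HB Require Import structures.
From mathcomp Require Import all_boot all_order all_algebra.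
From mathcomp Require Import finmap zify.
Set Implicit Arguments. Unset Strict Implicit. Unset Printing Implicit Defensive.
Import Order.TTheory GRing.Theory Num.Theory.
Local Open Scope fset_scope.
Local Open Scope ring_scope.

Lemma in_fset_sep (K : choiceType) (A : {fset K}) (P : pred K) x :
  (x \in [fset y in A | P y]) = (x \in A) && P x.
Proof. by rewrite !inE. Qed.

Lemma count_sumE (T : Type) (a : pred T) (s : seq T) : count a s = (\sum_(x <- s) a x)%N.
Proof. by rewrite -sum1_count big_mkcond; apply: eq_bigr => x _; case: (a x). Qed.

Lemma card_fset_sep (K : choiceType) (A : {fset K}) (P : pred K) :
  #|` [fset x in A | P x]| = count P A.
Proof.
have -> : [fset x in A | P x] = [fset x in [seq x <- A | P x]].
  by apply/fsetP => x; rewrite !inE mem_filter andbC.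
by rewrite card_fseq undup_id ?filter_uniq ?fset_uniq // size_filter.
Qed.

Lemma fsubset_sep (K : choiceType) (A : {fset K}) (P : pred K) : [fset x in A | P x] `<=` A.
Proof. by apply/fsubsetP => x; rewrite in_fset_sep => /andP[]. Qed.

Lemma sum_nat_pred1 (T : eqType) (r : seq T) k (F : T -> nat) : uniq r ->
  (\sum_(i <- r) (i == k) * F i = (k \in r) * F k)%N.
Proof.
elim: r => [|a r IH] /=; first by rewrite big_nil.
case/andP=> anr ur; rewrite big_cons IH // inE.
by case: (eqVneq a k) => [<-|] /=; rewrite ?(negPf anr) ?muln0 ?addn0.
Qed.

Lemma count_balanced (T : eqType) (s : seq T) (R : rel T) (P : pred T) :
  {in s &, forall x y, R x y = R y x} ->
  {in s, forall x, 0 < count (R x) s}%N ->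
  {in s &, forall x y, R x y -> count (R x) s = count (R y) s} ->
  {in s &, forall x y, R x y -> P y = ~~ P x} ->
  count P s = count (predC P) s.
Proof.
(* Double count the pairs [(x, y)] with [R x y], weighting them by [1 / count (R x) s]. *)
move=> Rsym dpos dR PR; pose d x : rat := (count (R x) s)%:R.
have spread (Q : pred T) x : x \in s ->
    (Q x)%:R = \sum_(y <- s) (Q x && R x y)%:R / d x :> rat.
  move=> xs; rewrite -mulr_suml -natr_sum -count_sumE.
  have -> : count (fun y => Q x && R x y) s = (Q x * count (R x) s)%N.
    by case: (Q x); rewrite ?mul1n ?mul0n //= count_pred0.
  by rewrite natrM mulfK // pnatr_eq0 -lt0n dpos.
have swap x y : x \in s -> y \in s ->
    (P x && R x y)%:R / d x = (~~ P y && R y x)%:R / d y :> rat.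
  move=> xs ys; case: (boolP (R x y)) => Rxy; last first.
    by rewrite -Rsym // (negPf Rxy) !andbF !mul0r.
  have Ryx : R y x by rewrite Rsym.
  by rewrite Ryx !andbT (PR _ _ ys xs Ryx) /d (dR _ _ xs ys Rxy).
apply/eqP; rewrite -(eqr_nat rat) !count_sumE !natr_sum; apply/eqP.
transitivity (\sum_(x <- s) \sum_(y <- s) (~~ P y && R y x)%:R / d y : rat).
  rewrite big_seq [RHS]big_seq; apply: eq_bigr => x xs.
  by rewrite (spread P x xs) big_seq [RHS]big_seq; apply: eq_bigr => y ys; exact: swap.
rewrite exchange_big big_seq [RHS]big_seq; apply: eq_bigr => y ys.
by rewrite (spread (predC P) y ys).
Qed.

(** * Squares, side midpoints and 2delta-squares *)

Definition side_mid (v : pt) : bool := ((v.1 %% 2)%Z == 0) && ((v.2 %% 2)%Z == 1).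

Definition step (x : bool) : int := if x then 1 else -1.

(* The squares around a side midpoint [v]: [vcell v true x] is black, above
   ([x = true]) or below [v]; [vcell v false x] is white, right or left of [v]. *)
Definition vcell (v : pt) (k x : bool) : pt :=
  if k then (v.1, v.2 + step x) else (v.1 + step x, v.2).
Arguments vcell : simpl never.

Definition cvertex (c : pt) (x : bool) : pt :=
  if is_black c then (c.1, c.2 - step x) else (c.1 - step x, c.2).

Lemma is_squareE c : is_square c = is_black c || is_white c.
Proof. by case: c => a b; rewrite /is_square /is_black /is_white /=; lia. Qed.

Lemma vcell_cvertex c x : vcell (cvertex c x) (is_black c) x = c.
Proof. by rewrite /vcell /cvertex; case: (is_black c); case: c => a b /=; rewrite subrK. Qed.

Lemma is_black_vcell v k x : side_mid v -> is_black (vcell v k x) = k.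
Proof. by case: v k x => a b [] []; rewrite /side_mid /is_black /vcell /step /=; lia. Qed.

Lemma is_square_vcell v k x : side_mid v -> is_square (vcell v k x).
Proof. by case: v k x => a b [] []; rewrite /side_mid /is_square /vcell /step /=; lia. Qed.

Lemma cvertex_vcell v k x : side_mid v -> cvertex (vcell v k x) x = v.
Proof.
move=> hv; rewrite /cvertex is_black_vcell // /vcell.
by case: k; case: v {hv} => a b /=; rewrite addrK.
Qed.

Lemma side_mid_cvertex c x : is_square c -> side_mid (cvertex c x).
Proof.
rewrite is_squareE /cvertex /side_mid /is_black /is_white /step.
by case: c x => a b [] /=; case: ifP => /=; lia.
Qed.

Lemma vcell_eq v k x c : side_mid v ->
  (vcell v k x == c) = (k == is_black c) && (v == cvertex c x).
Proof.
move=> hv; apply/eqP/andP => [<- | [/eqP -> /eqP ->]]; last exact: vcell_cvertex.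
by rewrite is_black_vcell // cvertex_vcell.
Qed.

Lemma cvertex_neq c : cvertex c true != cvertex c false.
Proof. by rewrite /cvertex /step; case: ifP; case: c => a b _; rewrite xpair_eqE /=; lia. Qed.

Definition big_of (c : pt) : pt :=
  let s := if ((c.1 + c.2 - 1) %% 4)%Z == 3 then -1 else 1 in
  if is_black c then (c.1 + s, c.2) else (c.1, c.2 + s).

Lemma is_bigE w : is_big w = ((w.1 %% 2)%Z == 1) && (((w.1 + w.2) %% 4)%Z == 3).
Proof. by case: w => a b; rewrite /is_big /big_corners /is_circ_vertex /=; lia. Qed.

Lemma mem_big_cells w c : is_big w -> (c \in big_cells w) = is_square c && (big_of c == w).
Proof.
rewrite is_bigE is_squareE /big_cells /big_of /is_black /is_white !inE.
case: w c => [a b] [c d] /=; rewrite !xpair_eqE /=.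
by case: ifP; case: ifP => /=; rewrite ?xpair_eqE; lia.
Qed.

(* [v] is the midpoint of a side of the 2delta-squares [vbig v true] and
   [vbig v false], which are [v +- (1,1)] if [diag v] and [v +- (1,-1)] otherwise. *)
Definition diag (v : pt) : bool := ((v.1 + v.2) %% 4)%Z == 1.

Definition vbig (v : pt) (x : bool) : pt :=
  (v.1 + (if diag v then step x else - step x), v.2 + step x).

Definition partner (v : pt) (x : bool) : bool := if diag v then x else ~~ x.

Lemma partnerK v : involutive (partner v).
Proof. by rewrite /partner; case: diag => x //=; rewrite negbK. Qed.

Lemma big_of_vcell v k x : side_mid v ->
  big_of (vcell v k x) = vbig v (if k then x else partner v x).
Proof.
move=> hv; rewrite /big_of is_black_vcell // /vbig /partner /vcell.
move: hv; rewrite /side_mid /diag /step.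
by case: v k x => a b [] [] /= hv; case: (((a + b) %% 4)%Z =P 1) => /= ?; case: ifP => ?;
  apply/eqP; rewrite xpair_eqE; lia.
Qed.

(* [domino_mid d] is the point at which the domino [d = vdomino v x y] sits. *)
Definition vdomino (v : pt) (x y : bool) : pt * pt := (vcell v true x, vcell v false y).

Definition domino_mid (d : pt * pt) : pt := (d.1.1, d.2.2).
Definition domino_x (d : pt * pt) : bool := d.1.2 == d.2.2 + 1.
Definition domino_y (d : pt * pt) : bool := d.2.1 == d.1.1 + 1.

Lemma domino_mid_vdomino v x y : domino_mid (vdomino v x y) = v.
Proof. by case: v x y => a b [] []. Qed.

Lemma domino_x_vdomino v x y : domino_x (vdomino v x y) = x.
Proof. by case: v x y => a b [] []; rewrite /domino_x /vdomino /vcell /step /=; lia. Qed.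

Lemma domino_y_vdomino v x y : domino_y (vdomino v x y) = y.
Proof. by case: v x y => a b [] []; rewrite /domino_y /vdomino /vcell /step /=; lia. Qed.

Lemma domino_shapeE d :
  is_black d.1 && is_white d.2 && share_side d.1 d.2 =
  side_mid (domino_mid d) && (d == vdomino (domino_mid d) (domino_x d) (domino_y d)).
Proof.
rewrite /share_side /psub /padd /popp /dlam /dlamb /is_black /is_white /side_mid.
rewrite /domino_mid /domino_x /domino_y /vdomino /vcell /step.
case: d => [[a b] [c d]] /=; rewrite !inE /= !xpair_eqE.
by case: ifP; case: ifP; rewrite /= ?xpair_eqE; lia.
Qed.

Lemma vdomino_inj v x y v' x' y' :
  (vdomino v x y == vdomino v' x' y') = [&& v == v', x == x' & y == y'].
Proof.
rewrite /vdomino /vcell /step; case: v v' x y x' y' => [a b] [a' b'] [] [] [] [];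
by rewrite /= !xpair_eqE /=; lia.
Qed.

Section Cells.
Variable H : {fset pt}.
Hypothesis Hbig : forall w, w \in H -> is_big w.
Local Notation C := (dom_cells H).

Lemma mem_dom_cells c : (c \in C) = is_square c && (big_of c \in H).
Proof.
apply/bigfcupP/andP => [[w /andP[wH _]] | [sq bH]].
  by rewrite in_fset mem_big_cells ?Hbig // => /andP[-> /eqP ->].
by exists (big_of c); rewrite ?bH // in_fset mem_big_cells ?sq ?eqxx ?Hbig.
Qed.

Lemma is_square_dom_cell c : c \in C -> is_square c.
Proof. by rewrite mem_dom_cells => /andP[]. Qed.

Lemma vcell_in_cells v k x : side_mid v ->
  (vcell v k x \in C) = (vbig v (if k then x else partner v x) \in H).
Proof. by move=> hv; rewrite mem_dom_cells is_square_vcell // big_of_vcell. Qed.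

Lemma vcell_pair v x : side_mid v ->
  (vcell v true x \in C) = (vcell v false (partner v x) \in C).
Proof. by move=> hv; rewrite !vcell_in_cells //= partnerK. Qed.

Lemma mem_dominoes d : (d \in dominoes H) =
  [&& d.1 \in C, d.2 \in C, side_mid (domino_mid d) &
      d == vdomino (domino_mid d) (domino_x d) (domino_y d)].
Proof. by rewrite /dominoes !inE /= -andbA -domino_shapeE andbA. Qed.

Lemma vdomino_in_dominoes v x y : side_mid v ->
  (vdomino v x y \in dominoes H) = (vcell v true x \in C) && (vcell v false y \in C).
Proof.
move=> hv; rewrite mem_dominoes domino_mid_vdomino domino_x_vdomino domino_y_vdomino.
by rewrite hv eqxx !andbT.
Qed.

Definition mids : {fset pt} := [fset domino_mid d | d in dominoes H].

Lemma side_mid_mids v : v \in mids -> side_mid v.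
Proof. by case/imfsetP => d /=; rewrite mem_dominoes => /and4P[_ _ ? _] ->. Qed.

Lemma vcell_mids v k x : side_mid v -> vcell v k x \in C -> v \in mids.
Proof.
move=> hv vC; apply/imfsetP.
have [y [z dC]] : exists y z, vdomino v y z \in dominoes H.
  case: k vC => vC.
    by exists x, (partner v x); rewrite vdomino_in_dominoes // -vcell_pair // vC.
  by exists (partner v x), x; rewrite vdomino_in_dominoes // vcell_pair // partnerK vC.
by exists (vdomino v y z); rewrite // domino_mid_vdomino.
Qed.

End Cells.

Definition vdom (v : pt) (k x t : bool) : pt * pt :=
  if k then vdomino v x t else vdomino v t x.

(** * Tilings seen from the side midpoints *)

(* [vdom v k x true] and [vdom v k x false] are the dominoes sitting at [v]
   that contain [vcell v k x]; [load X v k x] counts those in [X]. *)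
Definition load (X : {fset pt * pt}) (v : pt) (k x : bool) : nat :=
  ((vdom v k x true \in X) + (vdom v k x false \in X))%N.

Definition ncover (X : {fset pt * pt}) (c : pt) : nat :=
  (load X (cvertex c true) (is_black c) true + load X (cvertex c false) (is_black c) false)%N.

Definition covering (c : pt) : seq (pt * pt) :=
  [seq vdom (cvertex c x) (is_black c) x t | x <- [:: true; false], t <- [:: true; false]].

Lemma ncoverE X c : ncover X c = count (mem X) (covering c).
Proof. by rewrite /ncover /load /= !addnA addn0. Qed.



(* [c] picks its corner [cvertex c true] in [X]. *)
Definition picks (X : {fset pt * pt}) (c : pt) : bool :=
  load X (cvertex c true) (is_black c) true != 0%N.

Definition ntiles (X : {fset pt * pt}) (v : pt) : nat := (\sum_(x : bool) load X v true x)%N.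

(* Two dominoes of [X] sit at [v]: they cover the four squares around [v]. *)
Definition full (X : {fset pt * pt}) (v : pt) : bool := ntiles X v == 2%N.

Ltac case_mem :=
  repeat match goal with |- context [?a \in ?A] => case: (a \in A) end.

(* Decides a statement about the dominoes sitting at one vertex by enumerating
   the memberships of its four squares and four dominoes. *)
Ltac local_cases :=
  rewrite /load /vdom /partner /=; try case: (diag _) => /=; case_mem.

Section Tilings.
Variable H : {fset pt}.
Hypothesis Hbig : forall w, w \in H -> is_big w.
Local Notation C := (dom_cells H).
Local Notation D := (dominoes H).

Lemma card_covering (X : {fset pt * pt}) c : {subset X <= D} ->
  #|` [fset d in X | (d.1 == c) || (d.2 == c)]| = ncover X c.
Proof.
move=> XD; have uc : uniq (covering c).
  rewrite /covering /vdom /=; move: (cvertex_neq c).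
  by case: (is_black c); rewrite /= !inE !vdomino_inj /= => /negPf ne;
    rewrite ?eqxx ?ne 1?eq_sym ?ne /= ?andbF ?andbT ?orbF.
have -> : [fset d in X | (d.1 == c) || (d.2 == c)] = [fset d in [seq d <- covering c | d \in X]].
  apply/fsetP => d; rewrite !inE mem_filter andbC; case dX: (d \in X); rewrite ?andbF //=.
  move: (XD d dX); rewrite mem_dominoes => /and4P[_ _ hv /eqP ->].
  move: (domino_mid d) (domino_x d) (domino_y d) hv => v x y hv /=.
  rewrite !vcell_eq // /covering /vdom andbT.
  by case: (is_black c); rewrite /= !inE !vdomino_inj; case: x; case: y;
    rewrite /= ?andbT ?andbF ?orbF // orbC.
by rewrite card_fseq undup_id ?filter_uniq // size_filter ncoverE.
Qed.

Lemma tilingP T :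
  reflect (T `<=` D /\ forall c, c \in C -> ncover T c = 1%N) (is_tiling H T).
Proof.
apply: (iffP andP) => -[TD covT]; split=> //.
  move=> c cC; rewrite -card_covering; last exact/fsubsetP.
  by apply/eqP; move/forallP: covT => /(_ [` cC]).
by apply/forallP => c; rewrite card_covering ?covT ?fsvalP //; exact/fsubsetP.
Qed.

Lemma mem_tilings X : (X \in tilings H) = is_tiling H X.
Proof.
rewrite in_fset_sep fpowersetE; case tX: (is_tiling H X); rewrite ?andbF ?andbT //.
by case/tilingP: tX.
Qed.

Lemma vdom_cell v k x t : side_mid v -> vdom v k x t \in D -> vcell v k x \in C.
Proof. by move=> hv; case: k; rewrite /vdom vdomino_in_dominoes // => /andP[]. Qed.

Variable T : {fset pt * pt}.
Hypothesis tT : is_tiling H T.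

Lemma load_le_cell v k x : side_mid v -> (load T v k x <= (vcell v k x \in C))%N.
Proof.
move=> hv; have [TD covT] := tilingP T tT.
case vC: (vcell v k x \in C); last first.
  have notT t : vdom v k x t \in T = false.
    by apply/negbTE/negP => /(fsubsetP TD)/(vdom_cell hv); rewrite vC.
  by rewrite /load !notT.
change (load T v k x <= 1)%N; have := covT _ vC; rewrite /ncover is_black_vcell //.
by case: x {vC}; rewrite cvertex_vcell // => <-; rewrite ?leq_addr ?leq_addl.
Qed.

Lemma load_le1 v k x : side_mid v -> (load T v k x <= 1)%N.
Proof. by move=> hv; apply: leq_trans (load_le_cell k x hv) _; case: (_ \in _). Qed.

Lemma tiling_at v : side_mid v ->
  [&& load T v true true <= (vcell v true true \in C),
      load T v true false <= (vcell v true false \in C),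
      load T v false true <= (vcell v false true \in C),
      load T v false false <= (vcell v false false \in C),
      (vcell v true true \in C) == (vcell v false (partner v true) \in C) &
      (vcell v true false \in C) == (vcell v false (partner v false) \in C)]%N.
Proof. by move=> hv; rewrite !load_le_cell // !(vcell_pair Hbig _ hv) !eqxx. Qed.

Lemma load_pick c x : c \in C -> load T (cvertex c x) (is_black c) x = (picks T c == x).
Proof.
move=> cC; have [_ /(_ c cC)] := tilingP T tT; rewrite /ncover /picks.
by case: x; case: (load _ _ _ _) => [|[|?]]; case: (load _ _ _ _) => [|[|?]].
Qed.

Lemma load_vcell v k x : side_mid v -> vcell v k x \in C ->
  load T v k x = (picks T (vcell v k x) == x).
Proof. by move=> hv vC; rewrite -(load_pick x vC) is_black_vcell // cvertex_vcell. Qed.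

End Tilings.

(** * Flips and the complementary tiling *)

Section Complement.
Variable H : {fset pt}.
Hypothesis Hbig : forall w, w \in H -> is_big w.
Local Notation C := (dom_cells H).
Local Notation D := (dominoes H).

Definition ncells (v : pt) : nat := (\sum_(k : bool) \sum_(x : bool) (vcell v k x \in C))%N.

Definition empty (X : {fset pt * pt}) (v : pt) : bool := (ncells v == 4%N) && (ntiles X v == 0%N).

(* At an empty vertex the complement needs two dominoes at [v]; either perfect
   matching of the four squares will do, and we take the one with [x = y]. *)
Definition co_rule (X : {fset pt * pt}) (v : pt) (x y : bool) : bool :=
  [&& load X v true x == 0%N, load X v false y == 0%N & empty X v ==> (x == y)].

Definition co_tiling (X : {fset pt * pt}) : {fset pt * pt} :=
  [fset d in D | co_rule X (domino_mid d) (domino_x d) (domino_y d)].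

Definition flip (X : {fset pt * pt}) (S : {fset pt}) : {fset pt * pt} :=
  [fset d in D | (d \in X) (+) (domino_mid d \in S)].

Lemma mem_co_tiling X v x y : side_mid v ->
  (vdomino v x y \in co_tiling X) =
  [&& vcell v true x \in C, vcell v false y \in C & co_rule X v x y].
Proof.
move=> hv; rewrite in_fset_sep vdomino_in_dominoes // domino_mid_vdomino.
by rewrite domino_x_vdomino domino_y_vdomino andbA.
Qed.

Lemma mem_flip X S v x y : side_mid v ->
  (vdomino v x y \in flip X S) =
  [&& vcell v true x \in C, vcell v false y \in C & (vdomino v x y \in X) (+) (v \in S)].
Proof. by move=> hv; rewrite in_fset_sep vdomino_in_dominoes // domino_mid_vdomino andbA. Qed.

Definition same_pick (X Y : {fset pt * pt}) : bool := all (fun c => picks X c == picks Y c) C.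

Definition full_vertices (X : {fset pt * pt}) : {fset pt} := [fset v in mids H | full X v].

Definition empty_vertices (X : {fset pt * pt}) : {fset pt} := [fset v in mids H | empty X v].

Definition flip_set (X Y : {fset pt * pt}) : {fset pt} :=
  [fset v in full_vertices X | (vdomino v true true \in X) != (vdomino v true true \in Y)].

Lemma ncover_loads X Y : (forall v k x, side_mid v -> load X v k x = load Y v k x) ->
  forall c, is_square c -> ncover X c = ncover Y c.
Proof. by move=> E c sq; rewrite /ncover !E // side_mid_cvertex. Qed.

Definition pick_class (X : {fset pt * pt}) : {fset {fset pt * pt}} :=
  [fset Y in tilings H | same_pick X Y].

Variable T : {fset pt * pt}.
Hypothesis tT : is_tiling H T.

Lemma load_co_tiling v k x : side_mid v ->
  load (co_tiling T) v k x = ((vcell v k x \in C) - load T v k x)%N.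
Proof.
move=> hv; move: (tiling_at Hbig tT hv).
by case: k; rewrite /load /vdom !mem_co_tiling // /co_rule /empty /ncells /ntiles !big_bool;
  case: x; local_cases.
Qed.

Lemma full_co_tiling v : side_mid v -> full (co_tiling T) v = empty T v.
Proof.
move=> hv; move: (tiling_at Hbig tT hv).
rewrite /full /ntiles big_bool /load /vdom !mem_co_tiling // /co_rule /empty /ncells.
by rewrite /ntiles !big_bool; local_cases.
Qed.

Lemma load_flip (S : {fset pt}) v k x : {in S, forall u, full T u} -> side_mid v ->
  load (flip T S) v k x = load T v k x.
Proof.
move=> hS hv; move: (tiling_at Hbig tT hv) (introT implyP (hS v)).
by case: k; rewrite /load /vdom !mem_flip // /full /ntiles !big_bool; case: x; local_cases.
Qed.

Lemma full_vertices_co_tiling : full_vertices (co_tiling T) = empty_vertices T.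
Proof.
apply/fsetP => v; rewrite !in_fset_sep; case vm: (v \in mids H) => //=.
exact: full_co_tiling (side_mid_mids vm).
Qed.

Lemma co_tiling_tiling : is_tiling H (co_tiling T).
Proof.
apply/tilingP; split=> [|c cC]; first exact: fsubset_sep.
have sq := is_square_dom_cell Hbig cC.
rewrite /ncover !load_co_tiling ?side_mid_cvertex // !vcell_cvertex cC !(load_pick tT) //.
by case: (picks T c).
Qed.

Lemma pick_co_tiling c : c \in C -> picks (co_tiling T) c = ~~ picks T c.
Proof.
move=> cC; have sq := is_square_dom_cell Hbig cC.
rewrite /picks load_co_tiling ?side_mid_cvertex // vcell_cvertex cC (load_pick tT) //.
by case: (picks T c).
Qed.

Lemma flip_tiling (S : {fset pt}) : {in S, forall u, full T u} ->
  is_tiling H (flip T S) /\ same_pick T (flip T S).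
Proof.
move=> hS; have E v k x : side_mid v -> load (flip T S) v k x = load T v k x.
  exact: load_flip.
have [_ covT] := tilingP H T tT; split.
  apply/tilingP; split=> [|c cC]; first exact: fsubset_sep.
  by rewrite (ncover_loads E) ?covT // (is_square_dom_cell Hbig cC).
by apply/allP => c cC; rewrite /picks E ?side_mid_cvertex ?(is_square_dom_cell Hbig cC).
Qed.

Lemma flip_inj (S1 S2 : {fset pt}) : S1 `<=` full_vertices T -> S2 `<=` full_vertices T ->
  flip T S1 = flip T S2 -> S1 = S2.
Proof.
suff sub (S S' : {fset pt}) : S `<=` full_vertices T -> flip T S = flip T S' -> {subset S <= S'}.
  by move=> s1 s2 E; apply/fsetP => v; apply/idP/idP; apply: sub; rewrite ?E.
move=> sS E v vS; have := fsubsetP sS v vS; rewrite in_fset_sep => /andP[vm fv].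
have hv := side_mid_mids vm.
have [x [y dT]] : exists x y, vdomino v x y \in T.
  move: fv; rewrite /full /ntiles big_bool /load /vdom.
  case: (vdomino v true true \in T) / idP => [? _|_]; first by exists true, true.
  case: (vdomino v true false \in T) / idP => [? _|_]; first by exists true, false.
  case: (vdomino v false true \in T) / idP => [? _|_]; first by exists false, true.
  by case: (vdomino v false false \in T) / idP => [? _|_]; first by exists false, false.
have [TD _] := tilingP H T tT.
have /andP[c1 c2] : (vcell v true x \in C) && (vcell v false y \in C).
  by rewrite -vdomino_in_dominoes // (fsubsetP TD _ dT).
have := congr1 (fun X => vdomino v x y \in X) E => /=.
by rewrite !mem_flip // c1 c2 dT vS /=; case: (v \in S').
Qed.

Lemma load_same_pick (T' : {fset pt * pt}) v k x :
  is_tiling H T' -> same_pick T T' -> side_mid v -> load T' v k x = load T v k x.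
Proof.
move=> tT' /allP sp hv; case vC: (vcell v k x \in C); last first.
  have z X : is_tiling H X -> load X v k x = 0%N.
    by move=> tX; apply/eqP; rewrite -leqn0 -[0%N]/(nat_of_bool false) -vC load_le_cell.
  by rewrite !z.
by rewrite (load_vcell tT') ?(load_vcell tT) // (eqP (sp _ vC)).
Qed.

Lemma same_load_at (T' : {fset pt * pt}) v : side_mid v ->
  (forall k x, load T' v k x = load T v k x) ->
  forall x y, (vdomino v x y \in T') = (vdomino v x y \in T) (+)
    (full T v && ((vdomino v true true \in T) != (vdomino v true true \in T'))).
Proof.
move=> hv E x y; have e k z := introT eqP (E k z); have le1 k z := load_le1 tT k z hv.
move: (e true true) (e true false) (e false true) (e false false).
move: (le1 true true) (le1 true false) (le1 false true) (le1 false false).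
by rewrite /full /ntiles big_bool; case: x; case: y; local_cases.
Qed.

Lemma same_pick_flip (T' : {fset pt * pt}) :
  is_tiling H T' -> same_pick T T' -> T' = flip T (flip_set T T').
Proof.
move=> tT' sp; have [T'D _] := tilingP H T' tT'; apply/fsetP => d.
case dD: (d \in D); last first.
  by rewrite in_fset_sep dD; apply/negbTE/negP => /(fsubsetP T'D); rewrite dD.
have [hv dE] : side_mid (domino_mid d) /\ d = vdomino (domino_mid d) (domino_x d) (domino_y d).
  by move: dD; rewrite mem_dominoes => /and4P[_ _ ? /eqP].
move: dD; rewrite {}dE; move: (domino_mid d) (domino_x d) (domino_y d) hv => v x y hv.
rewrite vdomino_in_dominoes // mem_flip // => /andP[c1 c2]; rewrite c1 c2.
have vm : v \in mids H by apply: vcell_mids c1.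
rewrite !in_fset_sep vm /= (same_load_at hv) // => k z.
exact: load_same_pick.
Qed.

Lemma card_pick_class : #|` pick_class T| = (2 ^ #|` full_vertices T|)%N.
Proof.
have -> : pick_class T = [fset flip T S | S in fpowerset (full_vertices T)].
  apply/fsetP => T'; rewrite in_fset_sep mem_tilings.
  apply/andP/imfsetP => [[tT' sp] | [S /=]].
    exists (flip_set T T'); last exact: same_pick_flip.
    by rewrite fpowersetE fsubset_sep.
  rewrite fpowersetE => sS ->; apply: flip_tiling => u /(fsubsetP sS).
  by rewrite in_fset_sep => /andP[].
rewrite -card_fpowerset; apply/eqP/card_in_imfsetP => S1 S2.
by rewrite !fpowersetE; exact: flip_inj.
Qed.

End Complement.

(** * Full and empty vertices are equinumerous in a hedgehog domain *)

Definition side_dirs : seq pt := [:: (1, 1); (1, -1); (-1, -1); (-1, 1)].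

Definition side_pairs : seq (pt * pt) :=
  [:: ((1, 1), (1, -1)); ((1, -1), (-1, -1)); ((-1, -1), (-1, 1)); ((-1, 1), (1, 1))].

Lemma eq01_pair (m n : nat) : (m + n = 1)%N ->
  ((m == 0%N) + (n == 0%N) = (m == 1%N) + (n == 1%N))%N.
Proof. by case: m => [|[|m]]; case: n => [|[|n]]. Qed.

Lemma cyclic_balance (b1 b2 b3 b4 : bool) (n1 n2 n3 n4 : nat) :
  [|| ~~ b1 && ~~ b3 && ~~ b2 && ~~ b4, b1 && b2 && ~~ b3 && ~~ b4,
      b2 && b3 && ~~ b1 && ~~ b4, b3 && b4 && ~~ b1 && ~~ b2 | b4 && b1 && ~~ b3 && ~~ b2] ->
  (b1 -> b2 -> n1 + n2 = 1)%N -> (b2 -> b3 -> n2 + n3 = 1)%N ->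
  (b3 -> b4 -> n3 + n4 = 1)%N -> (b4 -> b1 -> n4 + n1 = 1)%N ->
  (b1 * (n1 == 0%N) + (b2 * (n2 == 0%N) + (b3 * (n3 == 0%N) + b4 * (n4 == 0%N))) =
   b1 * (n1 == 1%N) + (b2 * (n2 == 1%N) + (b3 * (n3 == 1%N) + b4 * (n4 == 1%N))))%N.
Proof.
case: b1; case: b2; case: b3; case: b4 => //= _ c1 c2 c3 c4;
  rewrite ?mul1n ?mul0n ?add0n ?addn0.
all: first [ exact: eq01_pair (c1 erefl erefl) | exact: eq01_pair (c2 erefl erefl)
           | exact: eq01_pair (c3 erefl erefl)
           | by rewrite addnC [RHS]addnC; exact: eq01_pair (c4 erefl erefl) ].
Qed.

Section Balance.
Variable H : {fset pt}.
Hypothesis Hbig : forall w, w \in H -> is_big w.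
Local Notation C := (dom_cells H).
Local Notation mids := (mids H).

Lemma sum_cells_mids (F : pt -> bool -> bool -> nat) :
  (\sum_(c <- C) \sum_(x : bool) F (cvertex c x) (is_black c) x =
   \sum_(v <- mids) \sum_(k : bool) \sum_(x : bool) (vcell v k x \in C) * F v k x)%N.
Proof.
have E c : c \in C -> (\sum_(x : bool) F (cvertex c x) (is_black c) x =
    \sum_(v <- mids) \sum_(k : bool) \sum_(x : bool) (vcell v k x == c) * F v k x)%N.
  move=> cC; have sq := is_square_dom_cell Hbig cC.
  transitivity (\sum_(v <- mids) \sum_(x : bool) (v == cvertex c x) * F v (is_black c) x)%N.
    rewrite exchange_big /=; apply: eq_bigr => x _; rewrite sum_nat_pred1 ?fset_uniq //.
    by rewrite (@vcell_mids _ Hbig _ (is_black c) x) ?side_mid_cvertex ?vcell_cvertex ?mul1n.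
  apply: eq_big_seq => v vm; rewrite !big_bool !vcell_eq ?(side_mid_mids vm) //.
  by case: (is_black c); rewrite /= ?addn0.
rewrite big_seq; under eq_bigr => c cC do rewrite (E c cC).
rewrite -big_seq exchange_big /=; apply: eq_bigr => v _.
rewrite exchange_big /=; apply: eq_bigr => k _.
rewrite exchange_big /=; apply: eq_bigr => x _.
under eq_bigr do rewrite eq_sym.
by rewrite (sum_nat_pred1 _ (fun=> F v k x)) ?fset_uniq.
Qed.

Lemma ncells_big v : side_mid v ->
  ncells H v = (2 * ((vbig v true \in H) + (vbig v false \in H)))%N.
Proof.
move=> hv; rewrite /ncells !big_bool !(vcell_in_cells Hbig) //= /partner.
by case: (diag v); case: (vbig v true \in H); case: (vbig v false \in H).
Qed.

Lemma sum_loads X v : (\sum_(k : bool) \sum_(x : bool) load X v k x = 2 * ntiles X v)%N.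
Proof. by rewrite /ntiles !big_bool /load /vdom /=; lia. Qed.

Lemma sum_ncells : (\sum_(v <- mids) ncells H v = 2 * #|` C|)%N.
Proof.
have := sum_cells_mids (fun _ _ _ => 1%N); rewrite big_bool card_fset_sum1 big_distrr /=.
by under [in RHS]eq_bigr do under eq_bigr do under eq_bigr do rewrite muln1.
Qed.

Lemma big_cells_dom w c : w \in H -> c \in big_cells w -> c \in C.
Proof. by move=> wH; rewrite mem_big_cells ?Hbig // mem_dom_cells // => /andP[-> /eqP ->]. Qed.

Lemma vbig_side v s : side_mid v -> s \in side_dirs -> is_big (psub v s) ->
  ((vbig v true \in H) + (vbig v false \in H) = (psub v s \in H) + (padd v s \in H))%N.
Proof.
move=> hv sd bw.
have : ((vbig v true == padd v s) && (vbig v false == psub v s)) ||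
       ((vbig v true == psub v s) && (vbig v false == padd v s)).
  move: sd bw hv; rewrite !inE is_bigE /vbig /diag /side_mid /padd /psub /popp /step.
  by case: v => a b /=; case/or4P => /eqP -> /=; case: ifP; rewrite !xpair_eqE /=; lia.
by case/orP => /andP[/eqP -> /eqP ->]; rewrite // addnC.
Qed.

Lemma side_mid_side w s : is_big w -> s \in side_dirs -> side_mid (padd w s).
Proof.
by rewrite !inE is_bigE /side_mid /padd; case: w => a b /= bw; case/or4P => /eqP -> /=; lia.
Qed.

Lemma side_mids w s : w \in H -> s \in side_dirs -> padd w s \in mids.
Proof.
move=> wH sd; have hv := side_mid_side (Hbig wH) sd.
apply: (vcell_mids Hbig (k := true) (x := s.2 == -1)) => //; apply: (big_cells_dom wH).
move: sd; rewrite /big_cells /vcell /padd /psub /popp /step !inE.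
by case: w {wH hv} => a b; case/or4P => /eqP -> /=; rewrite !xpair_eqE /=; lia.
Qed.

Lemma ncells_side w s : w \in H -> s \in side_dirs ->
  (ncells H (padd w s) == 2%N) = (padd w (padd s s) \notin H).
Proof.
move=> wH sd; have bw := Hbig wH.
have hv := side_mid_side bw sd.
have wE : psub (padd w s) s = w by rewrite /psub /padd /popp /= !addrK -surjective_pairing.
have sE : padd (padd w s) s = padd w (padd s s) by rewrite /padd /= !addrA.
rewrite ncells_big // (vbig_side hv sd) wE // wH sE.
by case: (_ \in H).
Qed.

Lemma sum_side_dirs v : side_mid v ->
  (\sum_(s <- side_dirs) (psub v s \in H) = (vbig v true \in H) + (vbig v false \in H))%N.
Proof.
move=> hv; rewrite /side_dirs !big_cons big_nil addn0.
have nH x : ~~ is_big x -> (x \in H) = false by move=> nx; apply: contraNF nx => /Hbig.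
move: hv; rewrite /vbig /psub /padd /popp /step /side_mid /diag.
case: v => a b /= hv; case: ifP => hd.
  rewrite (nH (a - 1, b + 1)) ?(nH (a + 1, b - 1)) ?is_bigE /=; try lia.
  by rewrite !opprK addn0 add0n addnC.
rewrite (nH (a - 1, b - 1)) ?(nH (a + 1, b + 1)) ?is_bigE /=; try lia.
by rewrite !opprK !add0n.
Qed.

(* A side midpoint with exactly two squares of the domain around it is the
   midpoint of a side of exactly one 2delta-square of the domain. *)
Lemma sum_bdry (h : pt -> nat) :
  (\sum_(v <- mids) (ncells H v == 2%N) * h v =
   \sum_(w <- H) \sum_(s <- side_dirs) (ncells H (padd w s) == 2%N) * h (padd w s))%N.
Proof.
set g := fun v => ((ncells H v == 2%N) * h v)%N.
transitivity (\sum_(w <- H) \sum_(s <- side_dirs) \sum_(v <- mids) (v == padd w s) * g v)%N;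
  last first.
  apply: eq_big_seq => w wH; apply: eq_big_seq => s sd.
  by rewrite sum_nat_pred1 ?fset_uniq // side_mids // mul1n.
under [RHS]eq_bigr do rewrite exchange_big /=.
rewrite [RHS]exchange_big /=; apply: eq_big_seq => v vm; have hv := side_mid_mids vm.
under [RHS]eq_bigr do rewrite -big_distrl /=.
rewrite -big_distrl /= exchange_big /=.
have -> : (\sum_(s <- side_dirs) \sum_(w <- H) (v == padd w s) =
           \sum_(s <- side_dirs) (psub v s \in H))%N.
  apply: eq_bigr => s _; rewrite -[RHS]muln1 -(sum_nat_pred1 _ (fun=> 1%N)) ?fset_uniq //.
  apply: eq_bigr => w _; rewrite muln1; congr nat_of_bool.
  by apply/eqP/eqP => ->; rewrite /psub /padd /popp /= ?addrK ?subrK -?surjective_pairing.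
rewrite sum_side_dirs // /g ncells_big //.
by case: (vbig v true \in H); case: (vbig v false \in H); rewrite /= ?mul0n ?muln0 ?mul1n.
Qed.





Variable T : {fset pt * pt}.
Hypothesis tT : is_tiling H T.

Lemma sum_ntiles : (\sum_(v <- mids) 2 * ntiles T v = #|` C|)%N.
Proof.
have [_ covT] := tilingP H T tT.
have := sum_cells_mids (load T).
have -> : (\sum_(c <- C) \sum_(x : bool) load T (cvertex c x) (is_black c) x = #|` C|)%N.
  rewrite card_fset_sum1 big_seq [RHS]big_seq; apply: eq_bigr => c cC.
  by rewrite big_bool /= -[(_ + _)%N]/(ncover T c) covT.
move=> ->; apply: eq_big_seq => v vm; rewrite -sum_loads; apply: eq_bigr => k _.
apply: eq_bigr => x _; have := load_le_cell tT k x (side_mid_mids vm).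
by case: (vcell v k x \in C); rewrite ?mul1n ?mul0n // leqn0 => /eqP.
Qed.

Lemma ntiles_le v : side_mid v -> (2 * ntiles T v <= ncells H v)%N.
Proof.
move=> hv; rewrite -sum_loads /ncells; apply: leq_sum => k _; apply: leq_sum => x _.
exact: load_le_cell.
Qed.

Lemma vertex_balance v : side_mid v ->
  (4 * ntiles T v + 4 * empty H T v + 2 * ((ncells H v == 2%N) * (ntiles T v == 0%N)) =
   ncells H v + 4 * full T v + 2 * ((ncells H v == 2%N) * (ntiles T v == 1%N)))%N.
Proof.
move=> hv; have := ntiles_le hv; rewrite /empty /full ncells_big //.
by case: (vbig v true \in H); case: (vbig v false \in H);
  case: (ntiles T v) => [|[|[|n]]] //=; lia.
Qed.

Lemma ntiles_bdry v k x : side_mid v -> ncells H v == 2%N -> vcell v k x \in C ->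
  ntiles T v = load T v k x.
Proof.
move=> hv; move: (tiling_at Hbig tT hv); rewrite /ncells /ntiles !big_bool.
by case: k; case: x; local_cases.
Qed.

Lemma corner_ntiles c : c \in C ->
  ncells H (cvertex c true) == 2%N -> ncells H (cvertex c false) == 2%N ->
  (ntiles T (cvertex c true) + ntiles T (cvertex c false) = 1)%N.
Proof.
move=> cC b1 b2; have sq := is_square_dom_cell Hbig cC.
rewrite (@ntiles_bdry _ (is_black c) true) ?(@ntiles_bdry _ (is_black c) false)
  ?side_mid_cvertex ?vcell_cvertex //.
by have [_ /(_ c cC) <-] := tilingP H T tT.
Qed.

Lemma side_corner w s s' : w \in H -> (s, s') \in side_pairs ->
  ncells H (padd w s) == 2%N -> ncells H (padd w s') == 2%N ->
  (ntiles T (padd w s) + ntiles T (padd w s') = 1)%N.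
Proof.
move=> wH sd b1 b2.
have key c b : c \in big_cells w -> cvertex c b = padd w s -> cvertex c (~~ b) = padd w s' ->
    (ntiles T (padd w s) + ntiles T (padd w s') = 1)%N.
  move=> cw e1 e2; have cC := big_cells_dom wH cw.
  case: b e1 e2 b1 b2 => <- <- b1 b2; last rewrite addnC; exact: corner_ntiles.
have := Hbig wH; rewrite is_bigE => par.
move: sd b1 b2 key; rewrite !inE => /or4P[] /eqP [-> ->] _ _ key;
  [apply: (key (padd w (1, 0)) false) | apply: (key (psub w (0, 1)) false)
  |apply: (key (psub w (1, 0)) true) | apply: (key (padd w (0, 1)) true)];
  rewrite ?inE ?eqxx ?orbT //.
all: move: par; rewrite /cvertex /is_black /psub /padd /popp /step /=.
all: by case: ifP => hb par; apply/eqP; rewrite xpair_eqE /=; lia.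
Qed.

Lemma square_balance w : w \in H -> hedgehog_local H w ->
  (\sum_(s <- side_dirs) (ncells H (padd w s) == 2%N) * (ntiles T (padd w s) == 0%N) =
   \sum_(s <- side_dirs) (ncells H (padd w s) == 2%N) * (ntiles T (padd w s) == 1%N))%N.
Proof.
move=> wH; rewrite /hedgehog_local /side_on_bdry /=.
rewrite -[padd w (2, 2)]/(padd w (padd (1, 1) (1, 1))).
rewrite -[padd w (2, -2)]/(padd w (padd (1, -1) (1, -1))).
rewrite -[padd w (popp (2, 2))]/(padd w (padd (-1, -1) (-1, -1))).
rewrite -[padd w (popp (2, -2))]/(padd w (padd (-1, 1) (-1, 1))).
rewrite -!(ncells_side wH) ?inE ?eqxx ?orbT // => hl.
rewrite /side_dirs !big_cons !big_nil !addn0.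
apply: (cyclic_balance hl); apply: (side_corner wH); by rewrite !inE eqxx ?orbT.
Qed.

Lemma card_full_empty : hedgehog H -> #|` full_vertices H T| = #|` empty_vertices H T|.
Proof.
case=> _ _ _ hl.
have bdry : (\sum_(v <- mids) (ncells H v == 2%N) * (ntiles T v == 0%N) =
             \sum_(v <- mids) (ncells H v == 2%N) * (ntiles T v == 1%N))%N.
  by rewrite !sum_bdry; apply: eq_big_seq => w wH; exact: square_balance (hl w wH).
have : (4 * \sum_(v <- mids) ntiles T v + 4 * \sum_(v <- mids) empty H T v +
         2 * \sum_(v <- mids) (ncells H v == 2%N) * (ntiles T v == 0%N) =
        \sum_(v <- mids) ncells H v + 4 * \sum_(v <- mids) full T v +
         2 * \sum_(v <- mids) (ncells H v == 2%N) * (ntiles T v == 1%N))%N.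
  rewrite !big_distrr -!big_split; apply: eq_big_seq => v vm.
  exact: vertex_balance (side_mid_mids vm).
have := sum_ntiles; rewrite -big_distrr /= => nT.
rewrite bdry sum_ncells -nT mulnA => /addIn /addnI /eqP; rewrite eqn_pmul2l // => /eqP fe.
by rewrite /full_vertices /empty_vertices !card_fset_sep !count_sumE; exact: esym fe.
Qed.

End Balance.

(** * Each corner is picked in half of the tilings *)

Section Standard.
Variable H : {fset pt}.
Hypothesis Hbig : forall w, w \in H -> is_big w.
Local Notation C := (dom_cells H).

(* Each 2delta-square of the domain is cut into two dominoes, those sitting at
   its side midpoints [w +- (1,1)]. *)
Definition std_tiling : {fset pt * pt} :=
  [fset d in dominoes H | diag (domino_mid d) && (domino_x d == domino_y d)].

Lemma mem_std_tiling v x y : side_mid v ->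
  (vdomino v x y \in std_tiling) =
  [&& vcell v true x \in C, vcell v false y \in C, diag v & x == y].
Proof.
move=> hv; rewrite in_fset_sep vdomino_in_dominoes // domino_mid_vdomino.
by rewrite domino_x_vdomino domino_y_vdomino -!andbA.
Qed.

Lemma load_std_tiling v k x : side_mid v ->
  load std_tiling v k x = (diag v && (vcell v k x \in C)).
Proof.
move=> hv; move: (vcell_pair Hbig true hv) (vcell_pair Hbig false hv).
by case: k; rewrite /load /vdom !mem_std_tiling //; case: x; local_cases.
Qed.

Lemma diag_cvertex c : is_square c -> diag (cvertex c false) = ~~ diag (cvertex c true).
Proof.
rewrite is_squareE /diag /cvertex /is_black /is_white /step.
by case: c => a b; case: ifP => /=; lia.
Qed.

Lemma std_tiling_tiling : is_tiling H std_tiling.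
Proof.
apply/tilingP; split=> [|c cC]; first exact: fsubset_sep.
have sq := is_square_dom_cell Hbig cC.
rewrite /ncover !load_std_tiling ?side_mid_cvertex // !vcell_cvertex cC diag_cvertex //.
by case: diag.
Qed.

End Standard.

Lemma hedgehog_big H : hedgehog H -> forall w, w \in H -> is_big w.
Proof. by case. Qed.

Section Halves.
Variable H : {fset pt}.
Hypothesis hH : hedgehog H.
Local Notation Hbig := (hedgehog_big hH).
Local Notation C := (dom_cells H).
Local Notation tilings := (tilings H).

Definition opposite_pick (X Y : {fset pt * pt}) : bool :=
  all (fun c => picks X c != picks Y c) C.

Lemma count_opposite T T' : opposite_pick T T' ->
  count (opposite_pick T) tilings = #|` pick_class H T'|.
Proof.
move=> /allP op; rewrite card_fset_sep; apply: eq_in_count => T'' _.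
apply: eq_in_all => c cC; move: (op c cC).
by case: (picks T c); case: (picks T' c); case: (picks T'' c).
Qed.

Lemma count_opposite_class T : is_tiling H T ->
  count (opposite_pick T) tilings = #|` pick_class H T|.
Proof.
move=> tT; have op : opposite_pick T (co_tiling H T).
  by apply/allP => c cC; rewrite (pick_co_tiling Hbig tT cC); case: (picks T c).
rewrite (count_opposite op) (card_pick_class Hbig (co_tiling_tiling Hbig tT)).
rewrite (card_pick_class Hbig tT).
by rewrite (full_vertices_co_tiling Hbig tT) (card_full_empty Hbig tT hH).
Qed.

Lemma picks_balanced a : a \in C ->
  count (fun T => picks T a) tilings = count (fun T => ~~ picks T a) tilings.
Proof.
move=> aC; apply: (@count_balanced _ _ opposite_pick).
- by move=> T T' _ _; apply: eq_in_all => c _; rewrite eq_sym.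
- move=> T; rewrite mem_tilings => tT.
  by rewrite count_opposite_class // (card_pick_class Hbig tT) expn_gt0.
- move=> T T'; rewrite !mem_tilings => tT tT' op.
  by rewrite (count_opposite op) count_opposite_class.
- by move=> T T' _ _ /allP/(_ a aC); case: (picks T a); case: (picks T' a).
Qed.

Lemma tilings_gt0 : (0 < #|` tilings|)%N.
Proof.
rewrite cardfs_gt0; apply/fset0Pn; exists (std_tiling H).
by rewrite mem_tilings (std_tiling_tiling Hbig).
Qed.

Lemma card_tilings_picks a : a \in C ->
  #|` tilings| = (count (fun T => picks T a) tilings).*2.
Proof.
move=> aC; rewrite -addnn; have := count_predC (fun T => picks T a) tilings.
by rewrite -[count (predC _) _]/(count (fun T => ~~ picks T a) tilings) -(picks_balanced aC) => ->.
Qed.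

Lemma dprob_pair_half u1 v1 u2 v2 a b : a \in C ->
  (forall T, is_tiling H T ->
     ((u1, v1) \in T) + ((u2, v2) \in T) = (if b then picks T a else ~~ picks T a))%N ->
  dprob H u1 v1 + dprob H u2 v2 = 1 / 2.
Proof.
move=> aC hT; rewrite /dprob -mulrDl -natrD !(@card_fset_sep _ tilings).
have -> : (count (fun T => (u1, v1) \in T) tilings + count (fun T => (u2, v2) \in T) tilings =
           count (fun T => picks T a) tilings)%N.
  transitivity (count (fun T => if b then picks T a else ~~ picks T a) tilings).
    rewrite !count_sumE -big_split /=; apply: (@eq_big_seq _ _ _ _ (tilings : seq _)) => T.
    by rewrite mem_tilings => /hT.
  by case: b {hT}; rewrite ?(picks_balanced aC).
have := tilings_gt0; rewrite (card_tilings_picks aC) -mul2n natrM.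
case: (count _ _) => [|n] // _.
by rewrite invfM mulrCA divff ?pnatr_eq0 // mulr1 div1r.
Qed.

End Halves.

Lemma white_loads (T : {fset pt * pt}) a : is_white a ->
  load T (cvertex a true) (is_black a) true =
    (((psub a dlam, a) \in T) + ((psub a dlamb, a) \in T))%N /\
  load T (cvertex a false) (is_black a) false =
    (((padd a dlam, a) \in T) + ((padd a dlamb, a) \in T))%N.
Proof.
move=> wa; have ba : is_black a = false by move: wa; rewrite /is_white /is_black; lia.
rewrite /load /vdom ba /vdomino /vcell /cvertex ba.
rewrite /step /psub /padd /popp /dlam /dlamb /=.
by case: a {wa ba} => p q /=; rewrite !subrK !opprK; split; first rewrite addnC.
Qed.

Lemma black_loads (T : {fset pt * pt}) a : is_black a ->
  load T (cvertex a false) (is_black a) false =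
    (((a, padd a dlam) \in T) + ((a, psub a dlamb) \in T))%N /\
  load T (cvertex a true) (is_black a) true =
    (((a, psub a dlam) \in T) + ((a, padd a dlamb) \in T))%N.
Proof.
move=> ba; rewrite /load /vdom ba /vdomino /vcell /cvertex ba.
rewrite /step /psub /padd /popp /dlam /dlamb /=.
by case: a {ba} => p q /=; rewrite !subrK !opprK; split; last rewrite addnC.
Qed.

Theorem corollary4p3 (H : {fset pt}) :
  hedgehog H ->
  (forall a : pt, is_white a -> interior_square H a ->
     dprob H (psub a dlam) a + dprob H (psub a dlamb) a = 1 / 2 /\
     dprob H (padd a dlam) a + dprob H (padd a dlamb) a = 1 / 2) /\
  (forall a : pt, is_black a -> interior_square H a ->
     dprob H a (padd a dlam) + dprob H a (psub a dlamb) = 1 / 2 /\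
     dprob H a (psub a dlam) + dprob H a (padd a dlamb) = 1 / 2).
Proof.
move=> hH.
split=> a col /andP[aC _]; split.
- apply: (dprob_pair_half hH (b := true) aC) => T tT.
  by rewrite -(white_loads T col).1 (load_pick tT true aC) eqb_id.
- apply: (dprob_pair_half hH (b := false) aC) => T tT.
  by rewrite -(white_loads T col).2 (load_pick tT false aC) eqbF_neg.
- apply: (dprob_pair_half hH (b := false) aC) => T tT.
  by rewrite -(black_loads T col).1 (load_pick tT false aC) eqbF_neg.
- apply: (dprob_pair_half hH (b := true) aC) => T tT.
  by rewrite -(black_loads T col).2 (load_pick tT true aC) eqb_id.
Qed.
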